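(* Let $k,n,m,\mu$ be positive integers such that $m\ge n-2$, $n\ge4$ if $m=n-2$, and $k\ge\mu(n+m-1)/2$. Let $\mathcal{A}$ be a strict partial path decomposition of $\mu K_n$ of size $k$ in which at most $\mu(m-1)/2$ colour classes are $2$-factors of $\mu K_n$. Then some edge of $\mu K_n$ not in $\mathcal{A}$ can be added to one of the colour classes of $\mathcal{A}$ so that the result $\mathcal{A}'$ is a partial path decomposition of $\mu K_n$ of size $k$ in which at most $\mu(m-1)/2$ colour classes are $2$-factors of $\mu K_n$.
   Context: Graphs may have multiple edges. $\mu K_n$ is the loopless multigraph on $n$ vertices with every pair of distinct vertices joined by exactly $\mu$ edges. A decomposition of size $k$ of a graph $G$ is an ordered $k$-tuple $(G(1),\dots,G(k))$ of spanning subgraphs (colour classes; possibly edgeless) with pairwise disjoint edge sets whose union is $E(G)$. A partial decomposition of $\mu K_n$ is a decomposition of some spanning subgraph of $\mu K_n$; it is strict if that subgraph is a proper subgraph of $\mu K_n$. A partial path decomposition is one in which every colour class is a vertex-disjoint union of paths and cycles (two parallel edges form a cycle of length 2). A $2$-factor of $\mu K_n$ is a $2$-regular spanning subgraph (its cycles may have length 2). *)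

From mathcomp Require Import all_boot.
Set Implicit Arguments. Unset Strict Implicit. Unset Printing Implicit Defensive.

(* Edges of mu K_n : an unordered pair {u,v} (u < v) of vertices of 'I_n,
   together with a label in 'I_mu distinguishing the mu parallel edges. *)
Definition edge (n mu : nat) : finType :=
  {x : ('I_n * 'I_n) * 'I_mu | (x.1.1 < x.1.2)%N}.

Definition eu n mu (e : edge n mu) : 'I_n := (val e).1.1.
Definition ev n mu (e : edge n mu) : 'I_n := (val e).1.2.

Definition joins n mu (e : edge n mu) (x y : 'I_n) : bool :=
  ((eu e == x) && (ev e == y)) || ((eu e == y) && (ev e == x)).

Definition is_path n mu (s : seq 'I_n) (t : seq (edge n mu)) : Prop :=
  [/\ (2 <= size s)%N, size t = (size s).-1, uniq s, uniq t &
      forall i, (i < size t)%N ->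
        forall x0 e0, joins (nth e0 t i) (nth x0 s i) (nth x0 s i.+1)].

(* A cycle piece: distinct vertices s_0..s_{l-1} (l >= 2), distinct edges
   t_0..t_{l-1}, t_i joining s_i and s_{(i+1) mod l}.
   (l = 2 gives a cycle formed by two parallel edges.) *)
Definition is_cycle n mu (s : seq 'I_n) (t : seq (edge n mu)) : Prop :=
  [/\ (2 <= size s)%N, size t = size s, uniq s, uniq t &
      forall i, (i < size t)%N ->
        forall x0 e0, joins (nth e0 t i) (nth x0 s i) (nth x0 s (i.+1 %% size s))].

(* The spanning subgraph with edge set H is a vertex-disjoint union of paths
   and cycles: pieces (cycle?, vertices, edges). *)
Definition paths_and_cycles n mu (H : {set edge n mu}) : Prop :=
  exists pcs : seq (bool * seq 'I_n * seq (edge n mu)),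
    [/\ forall p, p \in pcs ->
          (if p.1.1 then is_cycle p.1.2 p.2 else is_path p.1.2 p.2),
        forall i j, (i < size pcs)%N -> (j < size pcs)%N -> i <> j ->
          forall p0 x, x \in (nth p0 pcs i).1.2 -> x \notin (nth p0 pcs j).1.2 &
        forall e, e \in H <-> exists2 p, p \in pcs & e \in p.2].

Definition deg n mu (H : {set edge n mu}) (v : 'I_n) : nat :=
  #|[set e in H | (eu e == v) || (ev e == v)]|.

Definition two_factor n mu (H : {set edge n mu}) : bool :=
  [forall v, deg H v == 2].

(* A partial decomposition of size k of mu K_n: each edge of mu K_n receives
   a colour in 'I_k or is left out (None). *)
Definition pdecomp n mu k := {ffun edge n mu -> option 'I_k}.

Definition colour_class n mu k (A : pdecomp n mu k) (c : 'I_k) : {set edge n mu} :=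
  [set e | A e == Some c].

Definition strict n mu k (A : pdecomp n mu k) : Prop := exists e, A e = None.

Definition partial_path_decomp n mu k (A : pdecomp n mu k) : Prop :=
  forall c, paths_and_cycles (colour_class A c).

Definition n_two_factors n mu k (A : pdecomp n mu k) : nat :=
  #|[set c : 'I_k | two_factor (colour_class A c)]|.

Definition add_edge n mu k (A : pdecomp n mu k) (e : edge n mu) (c : 'I_k)
  : pdecomp n mu k :=
  [ffun x => if x == e then Some c else A x].

From mathcomp Require Import all_boot zify.
Set Implicit Arguments. Unset Strict Implicit. Unset Printing Implicit Defensive.

(* Let e = uv be an uncoloured edge. Adding e to a colour class in which u and
   v have degree at most 1 extends or closes the pieces ending at u and v, so
   the class stays a union of paths and cycles, and at most one new 2-factor
   appears. If no class can take e, then either the 2-factor budget has room and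
   every class has two edges at u or v, or the budget is full and every class
   has degree sum at least 2 at u and v (at least 4 for a 2-factor, and a class
   that is not one has degree 1 at both u and v if adding e would make it one).
   Counting against the (2n - 3)mu, resp. 2(n - 1)mu, edges at u or v, one of
   which (e) is uncoloured, contradicts 2k >= mu(n + m - 1). *)

(* lia treats [size] terms whose (convertible) type arguments differ
   syntactically as distinct atoms; [size_lia] first normalises them. *)
Ltac size_lia := repeat (match goal with
  | |- context[@size ?T ?t] => progress change (@size T t) with (size t)
  | H : context[@size ?T ?t] |- _ => progress change (@size T t) with (size t) in H
  end); lia.

Section Edges.
Variables (n mu : nat).
Notation E := (edge n mu).

Lemma eu_lt_ev (e : E) : (eu e < ev e)%N.
Proof. exact: valP e. Qed.

Lemma eu_neq_ev (e : E) : eu e != ev e.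
Proof. by apply/negP => /eqP E1; have := eu_lt_ev e; rewrite E1 ltnn. Qed.

Lemma joinsC (e : E) x y : joins e x y = joins e y x.
Proof. by rewrite /joins orbC. Qed.

Lemma joins_eu_ev (e : E) : joins e (eu e) (ev e).
Proof. by rewrite /joins !eqxx. Qed.

Definition incident (x : 'I_n) (f : E) := (eu f == x) || (ev f == x).

Lemma incident_eu (e : E) : incident (eu e) e.
Proof. by rewrite /incident eqxx. Qed.

Lemma incident_ev (e : E) : incident (ev e) e.
Proof. by rewrite /incident eqxx orbT. Qed.

Lemma joins_incidentl (f : E) x y : joins f x y -> incident x f.
Proof.
by rewrite /joins /incident => /orP [/andP [/eqP -> _]|/andP [_ /eqP ->]];
  rewrite eqxx ?orbT.
Qed.

Lemma joins_incidentr (f : E) x y : joins f x y -> incident y f.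
Proof. by rewrite joinsC; apply: joins_incidentl. Qed.

Lemma joins_mem (f : E) x y (s : seq 'I_n) : joins f x y -> x \in s -> y \in s ->
  (eu f \in s) && (ev f \in s).
Proof.
by rewrite /joins => /orP [/andP [/eqP -> /eqP ->]|/andP [/eqP -> /eqP ->]] -> ->.
Qed.

End Edges.

Section Chains.
Variables (n mu : nat).
Notation E := (edge n mu).

Definition chain (s : seq 'I_n) (t : seq E) : Prop :=
  [/\ (0 < size s)%N, size t = (size s).-1, uniq s, uniq t &
      forall i, (i < size t)%N ->
        forall x0 e0, joins (nth e0 t i) (nth x0 s i) (nth x0 s i.+1)].

Lemma chain_of_path s t : is_path s t -> chain s t.
Proof. by case=> h1 h2 h3 h4 h5; split=> //; lia. Qed.

Lemma path_of_chain s t : chain s t -> (2 <= size s)%N -> is_path s t.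
Proof. by case=> h1 h2 h3 h4 h5 h; split. Qed.

Lemma chain_rev s t : chain s t -> chain (rev s) (rev t).
Proof.
case=> h1 h2 h3 h4 h5; split; rewrite ?size_rev ?rev_uniq //.
move=> i hi x0 e0.
rewrite nth_rev // nth_rev; last by lia.
rewrite nth_rev; last by lia.
rewrite joinsC.
have -> : (size s - i.+2 = size t - i.+1)%N by lia.
have -> : (size s - i.+1 = (size t - i.+1).+1)%N by lia.
apply: h5; lia.
Qed.

Lemma chain_cat s1 t1 s2 t2 (e : E) :
  chain s1 t1 -> chain s2 t2 ->
  (forall x, x \in s1 -> x \notin s2) ->
  (forall f, f \in t1 -> f \notin t2) ->
  e \notin t1 -> e \notin t2 ->
  (forall x0, joins e (nth x0 s1 (size s1).-1) (nth x0 s2 0)) ->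
  chain (s1 ++ s2) (t1 ++ e :: t2).
Proof.
case=> a1 a2 a3 a4 a5; case=> b1 b2 b3 b4 b5 ds dt et1 et2 J; split.
- rewrite size_cat; lia.
- rewrite !size_cat; change (size (e :: t2)) with (size t2).+1; lia.
- rewrite cat_uniq a3 b3 /= andbT; apply/hasPn => x /= xs2.
  by apply/negP => /ds; rewrite xs2.
- rewrite cat_uniq a4 /= b4 et2 /= andbT negb_or et1 /=.
  apply/hasPn => f ft2; apply/negP => ft1.
  by move: (dt f ft1); rewrite ft2.
move=> i; rewrite size_cat; change (size (e :: t2)) with (size t2).+1 => hi x0 e0.
case: (ltnP i (size t1)) => hi1.
  have h1 : i < size s1 by lia.
  have h2 : i.+1 < size s1 by lia.
  rewrite !nth_cat hi1 h1 h2; exact: a5.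
case: (ltnP (size t1) i) => hi2.
  have h1 : i < size s1 = false by apply/negP; lia.
  have h2 : i.+1 < size s1 = false by apply/negP; lia.
  have h3 : i < size t1 = false by apply/negP; lia.
  rewrite !nth_cat h1 h2 h3.
  have -> : i - size t1 = (i - size t1 - 1).+1 by lia.
  have -> : i - size s1 = i - size t1 - 1 by lia.
  have -> : i.+1 - size s1 = (i - size t1 - 1).+1 by lia.
  apply: b5; lia.
have ei : i = size t1 by lia.
subst i.
have h1 : size t1 < size s1 by lia.
have h2 : (size t1).+1 < size s1 = false by apply/negP; lia.
rewrite !nth_cat ltnn h1 h2 subnn.
have -> : (size t1).+1 - size s1 = 0 by lia.
rewrite a2; exact: J.
Qed.

Lemma cycle_of_chain s t (e : E) : chain s t -> (2 <= size s)%N -> e \notin t ->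
  (forall x0, joins e (nth x0 s (size s).-1) (nth x0 s 0)) ->
  is_cycle s (rcons t e).
Proof.
case=> a1 a2 a3 a4 a5 h2 et J; split => //.
- by rewrite size_rcons a2; lia.
- by rewrite rcons_uniq et.
move=> i; rewrite size_rcons => hi x0 e0; rewrite nth_rcons.
case: (ltnP i (size t)) => hi1.
  rewrite modn_small; last by lia.
  exact: a5.
have ei : i = size t by lia.
subst i; rewrite eqxx.
have -> : (size t).+1 = size s by lia.
rewrite modnn a2; apply: J.
Qed.

End Chains.

Section Degrees.
Variables (n mu : nat).
Notation E := (edge n mu).

Lemma deg_ge2 (H : {set E}) x f1 f2 : f1 \in H -> f2 \in H -> f1 != f2 ->
  incident x f1 -> incident x f2 -> (2 <= deg H x)%N.
Proof.
move=> h1 h2 nf t1 t2; rewrite /deg.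
apply: leq_trans (_ : #|[set f1; f2]| <= _)%N; first by rewrite cards2 nf.
apply: subset_leq_card; apply/subsetP => y; rewrite !inE.
by case/orP => /eqP ->; rewrite ?h1 ?h2 -?/(incident x _) ?t1 ?t2.
Qed.

Lemma deg_chain_inner (H : {set E}) s t i x0 : chain s t -> {subset t <= H} ->
  (0 < i)%N -> (i.+1 < size s)%N -> (2 <= deg H (nth x0 s i))%N.
Proof.
case=> a1 a2 a3 a4 a5 sub hi0 hi.
have e0 : E by move: a2; case: (t) => [|f t'] /= ht; [size_lia | exact: f].
have j1 := a5 i.-1 ltac:(size_lia) x0 e0.
have j2 := a5 i ltac:(size_lia) x0 e0.
rewrite prednK // in j1.
apply: (deg_ge2 (f1 := nth e0 t i.-1) (f2 := nth e0 t i)).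
- by apply: sub; apply: mem_nth; size_lia.
- by apply: sub; apply: mem_nth; size_lia.
- rewrite nth_uniq //; size_lia.
- exact: joins_incidentr j1.
- exact: joins_incidentl j2.
Qed.

Lemma deg_cycle (H : {set E}) s t x : is_cycle s t -> {subset t <= H} ->
  x \in s -> (2 <= deg H x)%N.
Proof.
case=> a1 a2 a3 a4 a5 sub xs.
have e0 : E by move: a2; case: (t) => [|f t'] /= ht; [size_lia | exact: f].
have ex := nth_index x xs; set i := index x s in ex.
have hi : (i < size s)%N by rewrite index_mem.
have mem j : (j < size t)%N -> nth e0 t j \in H by move=> hj; apply/sub/mem_nth.
case: (posnP i) => [i0|ip].
  have j1 := a5 0 ltac:(size_lia) x e0.
  have j2 := a5 (size t).-1 ltac:(size_lia) x e0.
  have ei : (size t).-1.+1 = size s by size_lia.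
  rewrite ei modnn in j2.
  rewrite modn_small in j1; last by size_lia.
  apply: (deg_ge2 (f1 := nth e0 t 0) (f2 := nth e0 t (size t).-1)).
  - apply: mem; size_lia.
  - apply: mem; size_lia.
  - rewrite nth_uniq //; size_lia.
  - by rewrite -ex i0; exact: joins_incidentl j1.
  - by rewrite -ex i0; exact: joins_incidentr j2.
have j1 := a5 i.-1 ltac:(size_lia) x e0.
have j2 := a5 i ltac:(size_lia) x e0.
rewrite prednK // (modn_small hi) in j1.
apply: (deg_ge2 (f1 := nth e0 t i.-1) (f2 := nth e0 t i)).
- apply: mem; size_lia.
- apply: mem; size_lia.
- rewrite nth_uniq //; size_lia.
- by rewrite -ex; exact: joins_incidentr j1.
- by rewrite -ex; exact: joins_incidentl j2.
Qed.

Lemma deg_chain_end (H : {set E}) s t x : chain s t -> {subset t <= H} ->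
  x \in s -> (deg H x <= 1)%N -> x = nth x s 0 \/ x = nth x s (size s).-1.
Proof.
move=> C sub xs dg.
have ex := nth_index x xs; set i := index x s in ex.
have hi : (i < size s)%N by rewrite index_mem.
case: (posnP i) => [i0|ip]; first by left; rewrite -{1}ex i0.
case: (ltnP i.+1 (size s)) => hi2.
  by have := deg_chain_inner x C sub ip hi2; rewrite ex; size_lia.
right; rewrite -{1}ex; congr nth; size_lia.
Qed.

Lemma deg_setU1 (H : {set E}) e x : e \notin H ->
  deg (e |: H) x = deg H x + incident x e.
Proof.
move=> eH; rewrite /deg; case tx: (incident x e).
  have -> : [set f in e |: H | (eu f == x) || (ev f == x)] =
    e |: [set f in H | (eu f == x) || (ev f == x)].
    by apply/setP => f; rewrite !inE; case: (eqVneq f e) => [->|nf].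
  by rewrite cardsU1 inE (negbTE eH) /= addnC.
rewrite addn0; apply: eq_card => f; rewrite !inE.
case: (eqVneq f e) => [->|nf] //=.
by rewrite -/(incident x e) tx (negbTE eH).
Qed.

Lemma two_factor_setU1 (H : {set E}) e : e \notin H -> two_factor (e |: H) ->
  deg H (eu e) = 1 /\ deg H (ev e) = 1.
Proof.
move=> eH /forallP tf; have := eqP (tf (eu e)); have := eqP (tf (ev e)).
by rewrite !deg_setU1 // incident_eu incident_ev; lia.
Qed.

End Degrees.

Section Pieces.
Variables (n mu : nat).
Notation E := (edge n mu).
Notation piece := (bool * seq 'I_n * seq E)%type.

Definition is_piece (p : piece) :=
  if p.1.1 then is_cycle p.1.2 p.2 else is_path p.1.2 p.2.

Lemma is_piece_size p : is_piece p -> (2 <= size p.1.2)%N.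
Proof. by rewrite /is_piece; case: p.1.1 => -[]. Qed.

Lemma is_piece_ends p f : is_piece p -> f \in p.2 ->
  (eu f \in p.1.2) && (ev f \in p.1.2).
Proof.
move=> V fi; have sz := is_piece_size V; move: V; rewrite /is_piece.
have ex := nth_index f fi; set i := index f p.2 in ex.
have hi : (i < size p.2)%N by rewrite index_mem.
have x0 : 'I_n by case: p.1.2 sz => [|y _] //; exact: y.
case: p.1.1 => -[a1 a2 a3 a4 a5];
  have := a5 i hi x0 f; rewrite ex => J; apply: (joins_mem J); apply: mem_nth.
- by rewrite -a2.
- by rewrite ltn_pmod //; size_lia.
- size_lia.
- size_lia.
Qed.

(* [paths_and_cycles] with disjointness stated on the pieces themselves rather
   than on their indices. *)
Definition pieces_of (H : {set E}) (pcs : seq piece) : Prop :=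
  [/\ forall p, p \in pcs -> is_piece p, uniq pcs,
      forall p q, p \in pcs -> q \in pcs -> p != q ->
        forall x, x \in p.1.2 -> x \notin q.1.2 &
      forall e, e \in H <-> exists2 p, p \in pcs & e \in p.2].

Lemma paths_and_cyclesP H : paths_and_cycles H <-> exists pcs, pieces_of H pcs.
Proof.
split.
  case=> pcs [V D Ed]; exists pcs.
  have U : uniq pcs.
    apply/(uniqP (true, [::], [::])) => i j; rewrite !inE => hi hj eij.
    apply/eqP/negP => /negP nij.
    have sz := is_piece_size (V _ (mem_nth (true, [::], [::]) hi)).
    have [x0 x0i] : {x0 | x0 \in (nth (true, [::], [::]) pcs i).1.2}.
      by case: (nth (true, [::], [::]) pcs i).1.2 sz => [|y s] //; exists y; rewrite mem_head.
    have := D i j hi hj (fun e => elimN eqP nij e) (true, [::], [::]) x0 x0i.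
    by rewrite -eij x0i.
  split=> // p q pin qin pq x xp.
  have hij : index p pcs <> index q pcs.
    by move=> ei; move: pq; rewrite -(nth_index p pin) -(nth_index p qin) ei eqxx.
  have := D (index p pcs) (index q pcs) _ _ hij p x; rewrite !index_mem !nth_index //.
  by apply.
case=> pcs [V U D Ed]; exists pcs; split => // i j hi hj nij p0 x.
apply: D; try exact: mem_nth.
by rewrite nth_uniq //; apply/eqP.
Qed.

Section PiecesOf.
Variables (H : {set E}) (pcs : seq piece).
Hypothesis P : pieces_of H pcs.

Lemma pieces_of_sub p : p \in pcs -> {subset p.2 <= H}.
Proof. by case: P => _ _ _ Ed pin f fp; apply/Ed; exists p. Qed.

Lemma pieces_of_meet p q x : p \in pcs -> q \in pcs ->
  x \in p.1.2 -> x \in q.1.2 -> p = q.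
Proof.
case: P => _ _ D _ pin qin xp xq; apply/eqP/negPn/negP => pq.
by move: (D p q pin qin pq x xp); rewrite xq.
Qed.

Lemma pieces_of_deg_le1 p x : p \in pcs -> x \in p.1.2 -> (deg H x <= 1)%N ->
  p.1.1 = false /\ (x = nth x p.1.2 0 \/ x = nth x p.1.2 (size p.1.2).-1).
Proof.
move=> pin xp dg; have V : is_piece p by case: P => V _ _ _; apply: V.
have sub := pieces_of_sub pin.
move: V; rewrite /is_piece; case: p.1.1 => V.
  by have := deg_cycle V sub xp; size_lia.
by split => //; apply: (deg_chain_end (chain_of_path V) sub xp dg).
Qed.

Definition same_piece (u x : 'I_n) : Prop :=
  exists2 p, p \in pcs & (u \in p.1.2) && (x \in p.1.2).

Definition piece_edge (u : 'I_n) (f : E) : Prop :=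
  exists2 p, p \in pcs & (u \in p.1.2) && (f \in p.2).

(* The piece through a vertex u of degree at most 1, or the lone vertex u if
   there is none, read as a chain ending at u. *)
Lemma chain_ending_at u : (deg H u <= 1)%N ->
  exists sa ta, [/\ chain sa ta, nth u sa (size sa).-1 = u,
    forall x, x \in sa <-> x = u \/ same_piece u x &
    forall f, f \in ta <-> piece_edge u f].
Proof.
move=> dg.
case: (boolP (has (fun p => u \in p.1.2) pcs)) => [/hasP [p pin up]| /hasPn nu].
  have [pc ends] := pieces_of_deg_le1 pin up dg.
  have V : is_piece p by case: P => V _ _ _; apply: V.
  move: V; rewrite /is_piece pc => V; have C := chain_of_path V.
  have mems x : x \in p.1.2 <-> x = u \/ same_piece u x.
    split => [xp|]; first by right; exists p => //; rewrite up xp.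
    case=> [->//|[q qin /andP [uq xq]]].
    by rewrite (pieces_of_meet pin qin up uq).
  have memt f : f \in p.2 <-> piece_edge u f.
    split => [fp|]; first by exists p => //; rewrite up fp.
    case=> [q qin /andP [uq fq]].
    by rewrite (pieces_of_meet pin qin up uq).
  case: ends => [eh|el]; last by exists p.1.2, p.2; split.
  exists (rev p.1.2), (rev p.2); split.
  - exact: chain_rev.
  - have a1 : (0 < size p.1.2)%N by case: C.
    rewrite size_rev nth_rev; last by size_lia.
    have -> : (size p.1.2 - (size p.1.2).-1.+1 = 0)%N by size_lia.
    by rewrite -eh.
  - by move=> x; rewrite mem_rev.
  - by move=> f; rewrite mem_rev.
exists [:: u], [::]; split => //.
- move=> x; rewrite inE; split; first by move/eqP; left.
  case=> [->//|[q qin /andP [uq _]]].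
  by move: (nu q qin); rewrite uq.
- move=> f; rewrite in_nil; split => //; case=> [q qin /andP [uq _]].
  by move: (nu q qin); rewrite uq.
Qed.

Section Apart.
Variables u v : 'I_n.
Hypothesis apart : forall R, R \in pcs -> u \in R.1.2 -> v \in R.1.2 -> False.

Lemma same_piece_apart x : u != v ->
  x = u \/ same_piece u x -> x = v \/ same_piece v x -> False.
Proof.
move=> uv [->|[R Rin /andP [uR xR]]] [|[Q Qin /andP [vQ xQ]]].
- by move=> E1; move: uv; rewrite E1 eqxx.
- exact: (apart Qin xQ vQ).
- by move=> E1; apply: (apart Rin uR); rewrite -E1.
- by have eRQ := pieces_of_meet Rin Qin xR xQ; subst Q; apply: (apart Rin uR vQ).
Qed.

Lemma piece_edge_apart f : piece_edge u f -> piece_edge v f -> False.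
Proof.
move=> [R Rin /andP [uR fR]] [Q Qin /andP [vQ fQ]]; have [V _ _ _] := P.
have /andP [eR _] := is_piece_ends (V R Rin) fR.
have /andP [eQ _] := is_piece_ends (V Q Qin) fQ.
have eRQ := pieces_of_meet Rin Qin eR eQ; subst Q.
exact: (apart Rin uR vQ).
Qed.

End Apart.

Lemma pieces_of_replace (e : E) (u v : 'I_n) (np : piece) :
  is_piece np -> u \in np.1.2 ->
  (forall x, x \in np.1.2 -> [\/ x = u, x = v, same_piece u x | same_piece v x]) ->
  (forall f, f \in np.2 <-> [\/ f = e, piece_edge u f | piece_edge v f]) ->
  pieces_of (e |: H) (np :: [seq p <- pcs | (u \notin p.1.2) && (v \notin p.1.2)]).
Proof.
move=> Vn unp Mv Me; have [V U D Ed] := P.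
set rest := [seq p <- pcs | _].
have restE q : q \in rest -> [/\ q \in pcs, u \notin q.1.2 & v \notin q.1.2].
  by rewrite mem_filter => /andP [/andP [a b] c].
have dnp q : q \in rest -> forall x, x \in np.1.2 -> x \notin q.1.2.
  move=> /restE [qin uq vq] x.
  case/Mv => [->|->|[R Rin /andP [uR xR]]|[R Rin /andP [vR xR]]] //.
    by apply: (D R q Rin qin) => //; apply: contraNneq uq => <-.
  by apply: (D R q Rin qin) => //; apply: contraNneq vq => <-.
split.
- move=> p; rewrite inE => /orP [/eqP ->//|/restE [pin _ _]]; exact: V.
- by rewrite /= filter_uniq // andbT; apply/negP => /restE [_ /negP []].
- move=> p q; rewrite !inE => /orP [/eqP ->|pr] /orP [/eqP ->|qr].
  + by rewrite eqxx.
  + by move=> _; apply: dnp.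
  + move=> _ x xp; apply/negP => xn; by move: (dnp p pr x xn); rewrite xp.
  + have [pin _ _] := restE p pr; have [qin _ _] := restE q qr; exact: D.
move=> f; rewrite in_setU1; split.
  case/orP => [/eqP ->|/Ed [R Rin fR]].
    by exists np; rewrite ?inE ?eqxx //; apply/Me; apply: Or31.
  case: (boolP (u \in R.1.2)) => uR.
    by exists np; rewrite ?inE ?eqxx //; apply/Me; apply: Or32; exists R; rewrite ?uR.
  case: (boolP (v \in R.1.2)) => vR.
    by exists np; rewrite ?inE ?eqxx //; apply/Me; apply: Or33; exists R; rewrite ?vR.
  by exists R => //; rewrite inE mem_filter uR vR Rin orbT.
case=> p; rewrite inE => /orP [/eqP ->|pr].
  by case/Me => [->|[R Rin /andP [_ fR]]|[R Rin /andP [_ fR]]];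
    rewrite ?eqxx //; apply/orP; right; apply/Ed; exists R.
have [pin _ _] := restE p pr.
by move=> fp; apply/orP; right; apply/Ed; exists p.
Qed.

Variable e : E.
Hypotheses (eH : e \notin H) (du : (deg H (eu e) <= 1)%N) (dv : (deg H (ev e) <= 1)%N).
Local Notation u := (eu e).
Local Notation v := (ev e).

(* u and v end the same path, which e closes into a cycle. *)
Lemma pieces_of_close pv : pv \in pcs -> u \in pv.1.2 -> v \in pv.1.2 ->
  exists pcs', pieces_of (e |: H) pcs'.
Proof.
move=> pvin upv vpv.
have [sa [ta [Ca la Msa Mta]]] := chain_ending_at du.
have taH : {subset ta <= H}.
  by move=> f /Mta [R Rin /andP [_ /(pieces_of_sub Rin)]].
have eta : e \notin ta by apply/negP => /taH; rewrite (negbTE eH).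
have ua : u \in sa by apply/Msa; left.
have va : v \in sa by apply/Msa; right; exists pv => //; rewrite upv vpv.
have sz2 : (2 <= size sa)%N.
  case: sa {Ca la Msa taH} ua va => [//|w [|w' s']] //.
  by rewrite !inE => /eqP E0 /eqP E1; have := eu_neq_ev e; rewrite E0 E1 eqxx.
have hv0 : v = nth v sa 0.
  case: (deg_chain_end Ca taH va dv) => // hl.
  have E1 : nth v sa (size sa).-1 = u by rewrite (set_nth_default u) //; size_lia.
  by have := eu_neq_ev e; rewrite hl E1 eqxx.
exists ((true, sa, rcons ta e) :: [seq p <- pcs | (u \notin p.1.2) && (v \notin p.1.2)]).
apply: pieces_of_replace => //.
- rewrite /is_piece /=; apply: cycle_of_chain => // x0.
  rewrite (set_nth_default u) ?la; last by size_lia.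
  by rewrite (set_nth_default v) -?hv0 ?joins_eu_ev //; size_lia.
- by move=> x /Msa [->|ux]; [apply: Or41 | apply: Or43].
move=> f; rewrite /= mem_rcons inE; split.
  by case/orP => [/eqP ->|/Mta]; [apply: Or31 | apply: Or32].
case=> [->|/Mta ->|[R Rin /andP [vR fR]]]; rewrite ?eqxx ?orbT //.
have eR := pieces_of_meet Rin pvin vR vpv; subst R.
by apply/orP; right; apply/Mta; exists pv => //; rewrite upv fR.
Qed.

(* The chain ending at u, then e, then the chain starting at v. *)
Lemma pieces_of_join :
  (forall R, R \in pcs -> u \in R.1.2 -> v \in R.1.2 -> False) ->
  exists pcs', pieces_of (e |: H) pcs'.
Proof.
move=> apart.
have [sa [ta [Ca la Msa Mta]]] := chain_ending_at du.
have [sb0 [tb0 [Cb0 lb0 Msb0 Mtb0]]] := chain_ending_at dv.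
set sb := rev sb0; set tb := rev tb0.
have ua : u \in sa by apply/Msa; left.
have szA : (0 < size sa)%N by case: Ca.
have szb : (0 < size sb0)%N by case: Cb0.
have hb x0 : nth x0 sb 0 = v.
  by rewrite /sb nth_rev // subn1 (set_nth_default v) //; size_lia.
have Msb x : x \in sb <-> x = v \/ same_piece v x by rewrite mem_rev; apply: Msb0.
have Mtb f : f \in tb <-> piece_edge v f by rewrite mem_rev; apply: Mtb0.
have eta : e \notin ta.
  by apply/negP => /Mta [R Rin /andP [_ /(pieces_of_sub Rin)]]; rewrite (negbTE eH).
have etb : e \notin tb.
  by apply/negP => /Mtb [R Rin /andP [_ /(pieces_of_sub Rin)]]; rewrite (negbTE eH).
exists ((false, sa ++ sb, ta ++ e :: tb) ::
  [seq p <- pcs | (u \notin p.1.2) && (v \notin p.1.2)]).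
apply: pieces_of_replace => //.
- rewrite /is_piece /=; apply: path_of_chain; last first.
    by rewrite size_cat /sb size_rev; size_lia.
  apply: chain_cat => //; first exact: chain_rev.
  + move=> x /Msa xa; apply/negP => /Msb.
    exact: (same_piece_apart apart (eu_neq_ev e) xa).
  + by move=> f /Mta fa; apply/negP => /Mtb; apply: (piece_edge_apart apart fa).
  + by move=> x0; rewrite hb (set_nth_default u) ?la ?joins_eu_ev //; size_lia.
- by rewrite /= mem_cat ua.
- by move=> x; rewrite /= mem_cat => /orP [/Msa [->|ux]|/Msb [->|vx]];
    [apply: Or41 | apply: Or43 | apply: Or42 | apply: Or44].
move=> f; rewrite /= mem_cat inE; split.
  by case/or3P => [/Mta|/eqP ->|/Mtb]; [apply: Or32 | apply: Or31 | apply: Or33].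
by case=> [->|/Mta ->|/Mtb ->]; rewrite ?eqxx ?orbT.
Qed.

End PiecesOf.

Lemma paths_and_cycles_setU1 (H : {set E}) (e : E) :
  paths_and_cycles H -> e \notin H ->
  (deg H (eu e) <= 1)%N -> (deg H (ev e) <= 1)%N -> paths_and_cycles (e |: H).
Proof.
move=> /paths_and_cyclesP [pcs P] eH du dv; apply/paths_and_cyclesP.
case: (boolP (has (fun p => (eu e \in p.1.2) && (ev e \in p.1.2)) pcs)).
  by case/hasP => pv pvin /andP [upv vpv]; apply: (pieces_of_close P eH du dv pvin).
move=> /hasPn nb; apply: (pieces_of_join P eH du dv) => R Rin uR vR.
by move: (nb R Rin); rewrite uR vR.
Qed.

End Pieces.

Section Counting.
Variables (n mu : nat).
Notation E := (edge n mu).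

Lemma sum_bool_card (T : finType) (b : pred T) :
  \sum_(x : T) (b x : nat) = #|[set x | b x]|.
Proof.
by rewrite -sum1dep_card [RHS]big_mkcond /=; apply: eq_bigr => x _; case: (b x).
Qed.

Lemma sum_card_colour_class k (A : pdecomp n mu k) (P : pred E) :
  \sum_(c < k) #|[set f in colour_class A c | P f]| =
  #|[set f | (A f != None) && P f]|.
Proof.
transitivity (\sum_(c < k) \sum_(x : E) (((A x == Some c) && P x) : nat)).
  apply: eq_bigr => c _; rewrite (sum_bool_card (fun x => (A x == Some c) && P x)).
  by apply: eq_card => x; rewrite !inE.
rewrite -(sum_bool_card (fun f => (A f != None) && P f)) exchange_big /=.
apply: eq_bigr => x _; case Ax: (A x) => [c0|] /=; last by rewrite big1.
rewrite (bigD1 c0) //= eqxx big1 ?addn0 // => c nc.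
by case: eqP => // -[] E1; rewrite E1 eqxx in nc.
Qed.

Lemma sum_card_colour_class_lt k (A : pdecomp n mu k) (P : pred E) e :
  A e = None -> P e ->
  (\sum_(c < k) #|[set f in colour_class A c | P f]| < #|[set f | P f]|)%N.
Proof.
move=> Ae Pe; rewrite sum_card_colour_class (cardsD1 e [set f | P f]) inE Pe.
rewrite add1n ltnS; apply: subset_leq_card; apply/subsetP => x.
rewrite !inE => /andP [nA ->]; rewrite andbT; apply/eqP => E1.
by move: nA; rewrite E1 Ae.
Qed.

Lemma card_colour_classes_lt k (A : pdecomp n mu k) (P : pred E) e a :
  A e = None -> P e -> (forall c, a <= #|[set f in colour_class A c | P f]|)%N ->
  (a * k < #|[set f | P f]|)%N.
Proof.
move=> Ae Pe ha; apply: leq_trans (sum_card_colour_class_lt Ae Pe); rewrite ltnS.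
have -> : (a * k = \sum_(c < k) a)%N by rewrite sum_nat_const card_ord mulnC.
exact: leq_sum.
Qed.

Definition other_end (w : 'I_n) (x : E) := if eu x == w then ev x else eu x.

(* An edge at w is determined by its other end and its label. *)
Lemma card_incident_le (w : 'I_n) (W : {set 'I_n}) (S : {set E}) :
  (forall x, x \in S -> incident w x && (other_end w x \in W)) ->
  (#|S| <= #|W| * mu)%N.
Proof.
move=> HS; pose f (x : E) := (other_end w x, (val x).2).
have inj : {in S &, injective f}.
  move=> x y xS yS [] eo el.
  have /andP [tx _] := HS x xS; have /andP [ty _] := HS y yS.
  have lx := eu_lt_ev x; have ly := eu_lt_ev y.
  have [eu_xy ev_xy] : eu x = eu y /\ ev x = ev y.
    move: eo tx ty lx ly; rewrite /other_end /incident.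
    case: eqP => [ex|nx]; case: eqP => [ey|ny] /=.
    - by move=> ->; rewrite ex ey.
    - move=> eo _ /eqP ty lx ly; move: lx ly; rewrite eo ty -ex; lia.
    - move=> eo /eqP tx _ lx ly; move: lx ly; rewrite -eo tx -ey; lia.
    - by move=> -> /eqP -> /eqP ->.
  apply: val_inj; move: eu_xy ev_xy (el : (val x).2 = (val y).2); rewrite /eu /ev.
  by case: (val x) => [[a b] c]; case: (val y) => [[a' b'] c'] /= -> -> ->.
have -> : (#|W| * mu = #|setX W [set: 'I_mu]|)%N by rewrite cardsX cardsT card_ord.
rewrite -(card_in_imset inj); apply: subset_leq_card.
apply/subsetP => p /imsetP [x xS ->].
by rewrite !inE /=; have /andP [_ ->] := HS x xS.
Qed.

Lemma card_incident (u : 'I_n) : (#|[set x : E | incident u x]| <= n.-1 * mu)%N.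
Proof.
have := @card_incident_le u [set~ u] [set x : E | incident u x].
rewrite cardsC1 card_ord; apply => x; rewrite !inE => tx; rewrite tx /=.
have l := eu_lt_ev x; move: tx; rewrite /other_end /incident.
case: eqP => [E0|ne] /= => [_|/eqP ev]; apply/eqP => E1.
  by move: l; rewrite E0 E1 ltnn.
by apply: ne.
Qed.

Lemma card_incident_not (u v : 'I_n) : u != v ->
  (#|[set x : E | incident v x && ~~ incident u x]| <= (n - 2) * mu)%N.
Proof.
move=> uv.
have := @card_incident_le v (~: [set u; v]) [set x : E | incident v x && ~~ incident u x].
have -> : #|~: [set u; v]| = n - 2.
  by have := cardsC [set u; v]; rewrite cards2 uv card_ord; lia.
apply => x; rewrite !inE => /andP [tx nu]; rewrite tx /=.
have l := eu_lt_ev x; move: tx nu; rewrite /other_end /incident.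
case: eqP => [E0|ne] /=.
  move=> _ nu; rewrite negb_or; apply/andP; split.
    by apply/negP => /eqP E1; move: nu; rewrite E1 eqxx orbT.
  by apply/negP => /eqP E1; move: l; rewrite E0 E1 ltnn.
move=> /eqP ev nu; rewrite negb_or; apply/andP; split.
  by apply/negP => /eqP E1; move: nu; rewrite E1 eqxx.
by apply/negP => /eqP E1; move: l; rewrite E1 -ev ltnn.
Qed.

Lemma card_incident2 (u v : 'I_n) : u != v ->
  (#|[set x : E | incident u x || incident v x]| <= (2 * n - 3) * mu)%N.
Proof.
move=> uv.
have -> : [set x : E | incident u x || incident v x] =
  [set x | incident u x] :|: [set x | incident v x && ~~ incident u x].
  by apply/setP => x; rewrite !inE; case: (incident u x); case: (incident v x).
rewrite cardsU; have := card_incident u; have := card_incident_not uv.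
have -> : ((2 * n - 3) * mu = n.-1 * mu + (n - 2) * mu)%N.
  by rewrite -mulnDl; congr (_ * _); lia.
lia.
Qed.

End Counting.

Section AddEdge.
Variables (n mu k : nat) (A : pdecomp n mu k) (e : edge n mu).
Hypothesis Ae : A e = None.

Lemma notin_colour_class c : e \notin colour_class A c.
Proof. by rewrite inE Ae. Qed.

Lemma colour_class_add_edge c c' :
  colour_class (add_edge A e c) c' =
  if c' == c then e |: colour_class A c else colour_class A c'.
Proof.
apply/setP => x; rewrite /colour_class.
case: (eqVneq x e) => [->|nx]; case: (eqVneq c' c) => [->|nc];
  rewrite !inE ffunE ?eqxx ?Ae //= ?(negbTE nx) //.
by apply/eqP => -[] E1; rewrite E1 eqxx in nc.
Qed.

Lemma partial_path_decomp_add_edge c : partial_path_decomp A ->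
  (deg (colour_class A c) (eu e) <= 1)%N -> (deg (colour_class A c) (ev e) <= 1)%N ->
  partial_path_decomp (add_edge A e c).
Proof.
move=> ppd du dv c'; rewrite colour_class_add_edge; case: eqP => _; last exact: ppd.
exact: paths_and_cycles_setU1 (notin_colour_class c) du dv.
Qed.

Lemma n_two_factors_add_edge c :
  (n_two_factors (add_edge A e c) <=
   n_two_factors A + two_factor (e |: colour_class A c))%N.
Proof.
rewrite /n_two_factors; case: (boolP (two_factor (e |: colour_class A c))) => tf /=.
  set S := [set c' | two_factor (colour_class A c')].
  apply: leq_trans (_ : #|c |: S| <= _)%N; last by rewrite cardsU1 addnC leq_add2l leq_b1.
  apply: subset_leq_card; apply/subsetP => c'; rewrite !inE colour_class_add_edge.
  by case: eqP => [->|_ ->]; rewrite ?eqxx ?orbT.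
rewrite addn0; apply: subset_leq_card; apply/subsetP => c'.
rewrite !inE colour_class_add_edge.
by case: eqP => [->|//]; rewrite (negbTE tf).
Qed.

End AddEdge.

Section Blocked.
Variables (n mu k : nat) (A : pdecomp n mu k) (e : edge n mu).
Hypothesis Ae : A e = None.
Local Notation D c := (deg (colour_class A c)).

Lemma blocked_card :
  (forall c, (2 <= D c (eu e)) || (2 <= D c (ev e)))%N ->
  (2 * k < (2 * n - 3) * mu)%N.
Proof.
move=> blocked; apply: leq_trans (card_incident2 mu (eu_neq_ev e)).
apply: (card_colour_classes_lt Ae); first by rewrite incident_eu.
move=> c; case/orP: (blocked c) => /leq_trans; apply; apply: subset_leq_card;
  by apply/subsetP => f; rewrite !inE => /andP [-> H]; rewrite /incident H ?orbT.
Qed.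

Lemma blocked_deg :
  (forall c, 2 + 2 * two_factor (colour_class A c) <= D c (eu e) + D c (ev e))%N ->
  (2 * k + 2 * n_two_factors A < 2 * (n.-1 * mu))%N.
Proof.
move=> blocked.
have sum_lt w : incident w e -> (\sum_(c < k) D c w < n.-1 * mu)%N.
  by move=> we; apply: leq_trans (card_incident mu w); exact: (sum_card_colour_class_lt (P := incident w) Ae we).
have := sum_lt _ (incident_eu e); have := sum_lt _ (incident_ev e).
have : (2 * \sum_(c < k) (1 + two_factor (colour_class A c)) <=
        \sum_(c < k) (D c (eu e) + D c (ev e)))%N.
  by rewrite big_distrr; apply: leq_sum => c _ /=; rewrite mulnDr muln1; exact: blocked.
rewrite !big_split /= sum_nat_const card_ord sum_bool_card -/(n_two_factors A).
lia.
Qed.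

End Blocked.

Theorem lemma5 (k n m mu : nat) :
  (0 < k)%N -> (0 < n)%N -> (0 < m)%N -> (0 < mu)%N ->
  (n <= m + 2)%N ->
  (m + 2 = n -> 4 <= n)%N ->
  (mu * (n + m - 1) <= 2 * k)%N ->
  forall A : pdecomp n mu k,
    partial_path_decomp A -> strict A ->
    (2 * n_two_factors A <= mu * (m - 1))%N ->
    exists (e : edge n mu) (c : 'I_k),
      [/\ A e = None,
          partial_path_decomp (add_edge A e c) &
          (2 * n_two_factors (add_edge A e c) <= mu * (m - 1))%N].
Proof.
move=> _ _ m_gt0 _ n_le_m2 n_ge4 kb A ppd [e Ae] tb; pose t := n_two_factors A.
case: (pickP (fun c => [&& deg (colour_class A c) (eu e) <= 1,
         deg (colour_class A c) (ev e) <= 1 &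
         2 * (t + two_factor (e |: colour_class A c)) <= mu * (m - 1)]%N))
  => [c /and3P [du dv tc] | blocked].
  exists e, c; split => //; first exact: partial_path_decomp_add_edge.
  by apply: leq_trans tc; rewrite leq_mul2l (n_two_factors_add_edge Ae) orbT.
exfalso; case: (leqP (2 * t.+1) (mu * (m - 1))) => tb1.
  have span : ((2 * n - 3) * mu <= mu * (n + m - 1))%N.
    by rewrite mulnC leq_mul2l; apply/orP; right; lia.
  suff /(blocked_card Ae) : forall c,
      (2 <= deg (colour_class A c) (eu e)) || (2 <= deg (colour_class A c) (ev e)).
    by lia.
  move=> c; have /negbT := blocked c; rewrite !negb_and -!ltnNge.
  case/or3P => [-> // | -> | tc]; first by rewrite orbT.
  by have := leq_b1 (two_factor (e |: colour_class A c)); lia.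
have span : (2 * (n.-1 * mu) <= mu * (n + m - 1) + mu * (m - 1))%N.
  by rewrite -mulnDr mulnA mulnC leq_mul2l; apply/orP; right; lia.
suff /(blocked_deg Ae) : forall c, 2 + 2 * two_factor (colour_class A c) <=
    deg (colour_class A c) (eu e) + deg (colour_class A c) (ev e).
  by rewrite -/t; lia.
move=> c; case: (boolP (two_factor (colour_class A c))) => [/forallP tf|_].
  by rewrite (eqP (tf (eu e))) (eqP (tf (ev e))).
rewrite muln0 addn0; have /negbT := blocked c; rewrite !negb_and -!ltnNge.
case/or3P => [du|dv|tc].
- exact: leq_trans du (leq_addr _ _).
- exact: leq_trans dv (leq_addl _ _).
have tf : two_factor (e |: colour_class A c).
  by apply: contraTT tc => /negbTE ->; rewrite addn0 -leqNgt.
by have [-> ->] := two_factor_setU1 (notin_colour_class Ae c) tf.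
Qed.
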